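(* For every formula $\phi$, $\vdash_{\mathsf{BB'IW}}\phi$ if and only if $\phi$ is $\Lambda_{\mathrm{NF}}$-inhabited.
   Context: Formulas are built from propositional atoms with $\to$. $\vdash_{\mathsf{BB'IW}}\phi$ means that $\phi$ is derivable by modus ponens from the axioms consisting of all instances of $(\chi\to\psi)\to((\phi\to\chi)\to(\phi\to\psi))$ (${\sf B}$), $(\phi\to\chi)\to((\chi\to\psi)\to(\phi\to\psi))$ (${\sf B'}$), $\phi\to\phi$ (${\sf I}$), $(\phi\to(\phi\to\chi))\to(\phi\to\chi)$ (${\sf W}$); equivalently, some combinator over the basis ${\sf B},{\sf B'},{\sf I},{\sf W}$ has type $\phi$. Let $\mathcal X$ be a countably infinite set of variables with an injective map $\mathcal O:\mathcal X\to\mathbb N$; write $x<y$ iff $\mathcal O(x)<\mathcal O(y)$. Terms are terms of pure $\lambda$-calculus over $\mathcal X$, not identified up to $\alpha$-conversion; two distinct $\lambda$'s never bind the same variable and no variable is both free and bound in a term. HRM terms: every variable; $\lambda x.M$ if $M$ is HRM and $x$ is the greatest free variable of $M$; $(MN)$ if $M,N$ are HRM and for each free variable $x$ of $M$ there is a free variable $y$ of $N$ with $x\le y$. Fix $\Omega$ from variables to formulas with $\Omega^{-1}(\phi)$ infinite for all $\phi$. Typing: $x:\Omega(x)$; if $x:\chi$, $M:\psi$ and $\lambda x.M$ is HRM then $\lambda x.M:\chi\to\psi$; if $M:\chi\to\psi$, $N:\chi$, $(MN)$ HRM then $(MN):\psi$. $\Lambda_{\mathrm{NF}}$ is the set of typed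 terms in $\beta$-normal form; $\phi$ is $\Lambda_{\mathrm{NF}}$-inhabited if some closed term of $\Lambda_{\mathrm{NF}}$ has type $\phi$. *)

From Stdlib Require Import List.
Import ListNotations.
Set Implicit Arguments.

Inductive form : Type :=
| Atom : nat -> form
| Imp : form -> form -> form.

Inductive provable_BBpIW : form -> Prop :=
| ax_B : forall phi chi psi,
    provable_BBpIW (Imp (Imp chi psi) (Imp (Imp phi chi) (Imp phi psi)))
| ax_B' : forall phi chi psi,
    provable_BBpIW (Imp (Imp phi chi) (Imp (Imp chi psi) (Imp phi psi)))
| ax_I : forall phi, provable_BBpIW (Imp phi phi)
| ax_W : forall phi chi,
    provable_BBpIW (Imp (Imp phi (Imp phi chi)) (Imp phi chi))
| mp : forall phi psi,
    provable_BBpIW (Imp phi psi) -> provable_BBpIW phi -> provable_BBpIW psi.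

(** Raw lambda terms over a variable type X (no alpha-identification). *)
Inductive term (X : Type) : Type :=
| Var : X -> term X
| Lam : X -> term X -> term X
| App : term X -> term X -> term X.
Arguments Var {X}. Arguments Lam {X}. Arguments App {X}.

Section Terms.
Variable X : Type.

Fixpoint fv (M : term X) (x : X) : Prop :=
  match M with
  | Var y => x = y
  | Lam y M' => x <> y /\ fv M' x
  | App M1 M2 => fv M1 x \/ fv M2 x
  end.

Fixpoint bv (M : term X) (x : X) : Prop :=
  match M with
  | Var _ => False
  | Lam y M' => x = y \/ bv M' x
  | App M1 M2 => bv M1 x \/ bv M2 x
  end.

Fixpoint distinct_binders (M : term X) : Prop :=
  match M with
  | Var _ => True
  | Lam y M' => ~ bv M' y /\ distinct_binders M'
  | App M1 M2 => (forall x, ~ (bv M1 x /\ bv M2 x))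
                 /\ distinct_binders M1 /\ distinct_binders M2
  end.

Definition is_term (M : term X) : Prop :=
  distinct_binders M /\ forall x, ~ (fv M x /\ bv M x).

Definition closed (M : term X) : Prop := forall x, ~ fv M x.

Fixpoint beta_normal (M : term X) : Prop :=
  match M with
  | Var _ => True
  | Lam _ M' => beta_normal M'
  | App M1 M2 =>
      (match M1 with Lam _ _ => False | _ => True end)
      /\ beta_normal M1 /\ beta_normal M2
  end.

Variable O : X -> nat.

(** x < y iff O x < O y; HRM terms *)
Inductive HRM : term X -> Prop :=
| HRM_var : forall x, HRM (Var x)
| HRM_lam : forall x M, HRM M ->
    fv M x -> (forall y, fv M y -> O y <= O x) -> HRM (Lam x M)
| HRM_app : forall M N, HRM M -> HRM N ->
    (forall x, fv M x -> exists y, fv N y /\ O x <= O y) -> HRM (App M N).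

Variable Omega : X -> form.

Inductive has_type : term X -> form -> Prop :=
| ty_var : forall x, has_type (Var x) (Omega x)
| ty_lam : forall x M psi, has_type M psi -> HRM (Lam x M) ->
    has_type (Lam x M) (Imp (Omega x) psi)
| ty_app : forall M N chi psi, has_type M (Imp chi psi) -> has_type N chi ->
    HRM (App M N) -> has_type (App M N) psi.

Definition NF_inhabited (phi : form) : Prop :=
  exists M : term X, is_term M /\ closed M /\ beta_normal M /\ has_type M phi.

End Terms.

From Stdlib Require Import List Lia Classical Arith ClassicalEpsilon FinFun.

Set Implicit Arguments.

(* Soundness is normalization by evaluation.  Formulas are interpreted in the
   full function space over term-producing codes, and a Kripke-style logical
   relation records the free variables of the generated term; an argument may
   only be supplied when its free variables dominate those of the function,
   which is exactly the HRM condition on applications.  The axioms are then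
   inhabited by composition (B, B'), identity (I) and duplication (W), none of
   which discards an argument, and reification abstracts over fresh variables
   of order above everything used so far, which makes every lambda HRM.

   Completeness is bracket abstraction into combinators over B, B', I, W.  In
   an HRM term the abstracted variable is the largest free variable. *)

Section HRMLogic.
Variable X : Type.
Variable O : X -> nat.
Hypothesis O_inj : forall x y, O x = O y -> x = y.
Variable Omega : X -> form.

Definition var_union (S T : X -> Prop) : X -> Prop := fun y => S y \/ T y.

Definition same_vars (S T : X -> Prop) : Prop := forall y, S y <-> T y.

Definition dominated (S T : X -> Prop) : Prop :=
  forall x, S x -> exists y, T y /\ O x <= O y.

Definition bounded_by (S : X -> Prop) (k : nat) : Prop := forall y, S y -> O y < k.

Lemma dominated_total S T : dominated S T \/ dominated T S.
Proof.
  destruct (classic (dominated S T)) as [H|H]; [now left|right].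
  apply not_all_ex_not in H as [x Hx].
  apply imply_to_and in Hx as [Sx Hx].
  intros y Ty. exists x. split; [exact Sx|].
  destruct (le_lt_dec (O y) (O x)) as [Hle|Hlt]; [exact Hle|].
  exfalso. apply Hx. exists y. split; [exact Ty|lia].
Qed.

Lemma dominated_max_in_right S T x :
  dominated S T -> S x \/ T x -> (forall y, S y \/ T y -> O y <= O x) -> T x.
Proof.
  intros Hdom [Sx|Tx] Hmax; [|exact Tx].
  destruct (Hdom x Sx) as [y [Ty Hxy]].
  assert (Hyx : O y <= O x) by (apply Hmax; now right).
  replace x with y by (apply O_inj; lia). exact Ty.
Qed.

Lemma has_type_HRM M A : has_type O Omega M A -> HRM O M.
Proof. destruct 1; [constructor|assumption|assumption]. Qed.

Section Normalization.
Hypothesis Omega_inf : forall (phi : form) (l : list X),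
  exists x, Omega x = phi /\ ~ In x l.

Lemma exists_NoDup_of_type A n :
  exists l : list X, length l = n /\ NoDup l /\ forall x, In x l -> Omega x = A.
Proof.
  induction n as [|n [l [Hlen [Hnd Hty]]]].
  - exists nil. repeat split; [constructor|intros x []].
  - destruct (Omega_inf A l) as [x [Hx Hnotin]].
    exists (x :: l). repeat split; simpl.
    + now rewrite Hlen.
    + now constructor.
    + intros y [<-|Hy]; auto.
Qed.

Lemma exists_var_of_type_above A k : exists x, Omega x = A /\ k <= O x.
Proof.
  destruct (exists_NoDup_of_type A (S k)) as [l [Hlen [Hnd Hty]]].
  apply NNPP. intros Hnone.
  assert (Hbelow : forall x, In x l -> O x < k).
  { intros x Hx. destruct (le_lt_dec k (O x)) as [Hle|Hlt]; [|exact Hlt].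
    exfalso. apply Hnone. exists x. auto. }
  assert (Hincl : incl (map O l) (seq 0 k)).
  { intros n Hn. apply in_map_iff in Hn as [x [<- Hx]].
    apply in_seq. specialize (Hbelow x Hx). lia. }
  pose proof (NoDup_incl_length (Injective_map_NoDup O_inj Hnd) Hincl) as Hle.
  rewrite length_map, length_seq in Hle. lia.
Qed.

Definition fresh (A : form) (k : nat) : X :=
  proj1_sig (constructive_indefinite_description _ (exists_var_of_type_above A k)).

Lemma fresh_type A k : Omega (fresh A k) = A.
Proof. unfold fresh. destruct constructive_indefinite_description; simpl; tauto. Qed.

Lemma fresh_above A k : k <= O (fresh A k).
Proof. unfold fresh. destruct constructive_indefinite_description; simpl; tauto. Qed.

(* A code receives a lower bound [k] on the orders of the variables it may
   bind and returns a term together with a bound on the orders it did bind. *)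
Definition code : Type := nat -> term X * nat.

Fixpoint sem_dom (A : form) : Type :=
  match A with
  | Atom _ => code
  | Imp A1 B1 => sem_dom A1 -> sem_dom B1
  end.

Fixpoint reify (A : form) {struct A} : sem_dom A -> code :=
  match A return sem_dom A -> code with
  | Atom _ => fun v => v
  | Imp A1 B1 => fun f k =>
      let x := fresh A1 k in
      let r := reify B1 (f (reflect A1 (fun k0 => (Var x, k0)))) (S (O x)) in
      (Lam x (fst r), snd r)
  end
with reflect (A : form) {struct A} : code -> sem_dom A :=
  match A return code -> sem_dom A with
  | Atom _ => fun g => g
  | Imp A1 B1 => fun g a => reflect B1 (fun k =>
      let r1 := g k in
      let r2 := reify A1 a (snd r1) in
      (App (fst r1) (fst r2), snd r2))
  end.

Record generates (S : X -> Prop) (A : form) (k : nat) (M : term X) (k' : nat)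
  : Prop := {
  gen_counter : k <= k';
  gen_fv : same_vars (fv M) S;
  gen_bv : forall y, bv M y -> k <= O y < k';
  gen_distinct : distinct_binders M;
  gen_normal : beta_normal M;
  gen_typed : has_type O Omega M A }.

Definition good (S : X -> Prop) (A : form) (g : code) : Prop :=
  forall k, bounded_by S k -> generates S A k (fst (g k)) (snd (g k)).

Definition neutral (M : term X) : Prop :=
  match M with Lam _ _ => False | _ => True end.

Definition good_neutral (S : X -> Prop) (A : form) (g : code) : Prop :=
  good S A g /\ forall k, bounded_by S k -> neutral (fst (g k)).

(* [S] is the exact set of free variables of the generated terms; an
   argument must have free variables dominating [S], so that applying to it
   yields an HRM term. *)
Fixpoint Sem (A : form) : (X -> Prop) -> sem_dom A -> Prop :=
  match A return (X -> Prop) -> sem_dom A -> Prop with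
  | Atom p => fun S v => good_neutral S (Atom p) v
  | Imp A1 B1 => fun S f =>
      forall T a, Sem A1 T a -> dominated S T -> Sem B1 (var_union S T) (f a)
  end.

Lemma Sem_same_vars A : forall S T v, same_vars S T -> Sem A S v -> Sem A T v.
Proof.
  induction A as [p|A1 _ B1 IHB]; intros S T v E H.
  - destruct H as [Hgood Hneu]. split.
    + intros k Hk. destruct (Hgood k) as [h1 h2 h3 h4 h5 h6].
      { intros y Hy. apply Hk, E, Hy. }
      split; auto. intros y. rewrite (h2 y). apply E.
    + intros k Hk. apply Hneu. intros y Hy. apply Hk, E, Hy.
  - intros T' a Ha Hdom. apply (IHB (var_union S T')).
    + intros y. unfold var_union. rewrite (E y). tauto.
    + apply H; [exact Ha|]. intros x Hx. apply Hdom, E, Hx.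
Qed.

Lemma var_code_good_neutral x :
  good_neutral (fun y => y = x) (Omega x) (fun k => (Var x, k)).
Proof.
  split; [|intros; exact I].
  intros k _. split; simpl.
  - constructor.
  - intros y. tauto.
  - intros y [].
  - exact I.
  - exact I.
  - constructor.
Qed.

Lemma generates_lam S A B k x M k' :
  Omega x = A -> bounded_by S k -> k <= O x ->
  generates (var_union S (fun y => y = x)) B (Datatypes.S (O x)) M k' ->
  generates S (Imp A B) k (Lam x M) k'.
Proof.
  intros Hx Hk Hkx [h1 h2 h3 h4 h5 h6].
  assert (Hneq : forall y, S y -> y <> x).
  { intros y Sy ->. specialize (Hk x Sy). lia. }
  split; simpl.
  - lia.
  - intros y. rewrite (h2 y). unfold var_union.
    split; [intros [Hne [Sy|Hy]]; [exact Sy|contradiction]|].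
    intros Sy. split; [apply Hneq, Sy|now left].
  - intros y [->|Hy]; [lia|]. specialize (h3 y Hy). lia.
  - split; [|exact h4]. intros Hb. specialize (h3 x Hb). lia.
  - exact h5.
  - rewrite <- Hx. constructor; [exact h6|].
    constructor; [eapply has_type_HRM; eauto|apply h2; now right|].
    intros y Hy. destruct (proj1 (h2 y) Hy) as [Sy| ->]; [specialize (Hk y Sy)|]; lia.
Qed.

Lemma generates_app S T A B k M k1 N k2 :
  generates S (Imp A B) k M k1 -> neutral M -> generates T A k1 N k2 ->
  dominated S T -> generates (var_union S T) B k (App M N) k2.
Proof.
  intros [g1 g2 g3 g4 g5 g6] HM [a1 a2 a3 a4 a5 a6] Hdom.
  split; simpl.
  - lia.
  - intros y. rewrite (g2 y), (a2 y). reflexivity.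
  - intros y [Hy|Hy]; [specialize (g3 y Hy)|specialize (a3 y Hy)]; lia.
  - split; [|tauto]. intros y [Hy1 Hy2].
    specialize (g3 y Hy1). specialize (a3 y Hy2). lia.
  - split; [|tauto]. destruct M; [exact I|contradiction|exact I].
  - econstructor; [exact g6|exact a6|].
    constructor; [eapply has_type_HRM; eauto|eapply has_type_HRM; eauto|].
    intros y Hy. apply g2 in Hy. destruct (Hdom y Hy) as [z [Tz Hyz]].
    exists z. split; [apply a2, Tz|exact Hyz].
Qed.

Lemma reify_reflect_sound A :
  (forall S v, Sem A S v -> good S A (reify A v)) /\
  (forall S g, good_neutral S A g -> Sem A S (reflect A g)).
Proof.
  induction A as [p|A1 [IHreify1 IHreflect1] B1 [IHreify2 IHreflect2]].
  - split; [intros S v [Hgood _]; exact Hgood|intros S g Hg; exact Hg].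
  - split.
    + intros S f Hf k Hk. simpl.
      set (x := fresh A1 k).
      assert (Hkx : k <= O x) by apply fresh_above.
      apply generates_lam; [apply fresh_type|exact Hk|exact Hkx|].
      apply IHreify2.
      * apply Hf.
        -- apply IHreflect1. rewrite <- (fresh_type A1 k). apply var_code_good_neutral.
        -- intros y Sy. exists x. specialize (Hk y Sy). split; [reflexivity|lia].
      * intros y [Sy| ->]; [specialize (Hk y Sy)|]; lia.
    + intros S g [Hg Hneu] T a Ha Hdom. apply IHreflect2.
      split; [|intros; exact I].
      intros k Hk.
      assert (HkS : bounded_by S k) by (intros y Sy; apply Hk; now left).
      pose proof (Hg k HkS) as Hgk.
      simpl. eapply generates_app; [exact Hgk|exact (Hneu k HkS)| |exact Hdom].
      apply IHreify1; [exact Ha|].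
      intros y Ty. specialize (Hk y (or_intror Ty)). apply gen_counter in Hgk. lia.
Qed.

Lemma Sem_compose phi chi psi Ta a Tb b :
  Sem (Imp chi psi) Ta a -> Sem (Imp phi chi) Tb b ->
  Sem (Imp phi psi) (var_union Ta Tb) (fun c => a (b c)).
Proof.
  intros Ha Hb Tc c Hc Hdom.
  apply (@Sem_same_vars psi (var_union Ta (var_union Tb Tc)));
    [unfold same_vars, var_union; tauto|].
  apply Ha.
  - apply Hb; [exact Hc|]. intros y Hy. apply Hdom. now right.
  - intros y Hy. destruct (Hdom y (or_introl Hy)) as [z [Hz Hyz]].
    exists z. split; [now right|exact Hyz].
Qed.

Lemma Sem_duplicate phi chi Tf f :
  Sem (Imp phi (Imp phi chi)) Tf f -> Sem (Imp phi chi) Tf (fun x => f x x).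
Proof.
  intros Hf Tx x Hx Hdom.
  apply (@Sem_same_vars chi (var_union (var_union Tf Tx) Tx));
    [unfold same_vars, var_union; tauto|].
  apply (Hf Tx x Hx Hdom Tx x Hx).
  intros y [Hy|Hy]; [apply Hdom, Hy|exists y; auto].
Qed.

Lemma provable_Sem phi : provable_BBpIW phi -> exists v, Sem phi (fun _ => False) v.
Proof.
  induction 1 as [phi chi psi|phi chi psi|phi|phi chi|phi psi _ [f Hf] _ [a Ha]].
  - exists (fun a b c => a (b c)). intros Ta a Ha _ Tb b Hb _.
    eapply Sem_same_vars; [|exact (Sem_compose Ha Hb)].
    unfold same_vars, var_union; tauto.
  - exists (fun a b c => b (a c)). intros Ta a Ha _ Tb b Hb _.
    eapply Sem_same_vars; [|exact (Sem_compose Hb Ha)].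
    unfold same_vars, var_union; tauto.
  - exists (fun a => a). intros T a Ha _.
    eapply Sem_same_vars; [|exact Ha]. unfold same_vars, var_union; tauto.
  - exists (fun f x => f x x). intros Tf f Hf _.
    eapply Sem_same_vars; [|exact (Sem_duplicate Hf)].
    unfold same_vars, var_union; tauto.
  - exists (f a). eapply Sem_same_vars; [|apply (Hf _ a Ha); intros y []].
    unfold same_vars, var_union; tauto.
Qed.

Theorem provable_NF_inhabited phi : provable_BBpIW phi -> NF_inhabited O Omega phi.
Proof.
  intros H. destruct (provable_Sem H) as [v Hv].
  destruct (proj1 (reify_reflect_sound phi) _ v Hv 0) as [_ h2 h3 h4 h5 h6];
    [intros y []|].
  exists (fst (reify phi v 0)). repeat split; auto.
  - intros y [Hfv _]. exact (proj1 (h2 y) Hfv).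
  - intros y Hfv. exact (proj1 (h2 y) Hfv).
Qed.

End Normalization.

Section BracketAbstraction.

Inductive comb : Type :=
| CVar (x : X)
| CB | CB' | CI | CW
| CApp (p q : comb).

Inductive comb_type : comb -> form -> Prop :=
| ct_var x : comb_type (CVar x) (Omega x)
| ct_B phi chi psi :
    comb_type CB (Imp (Imp chi psi) (Imp (Imp phi chi) (Imp phi psi)))
| ct_B' phi chi psi :
    comb_type CB' (Imp (Imp phi chi) (Imp (Imp chi psi) (Imp phi psi)))
| ct_I phi : comb_type CI (Imp phi phi)
| ct_W phi chi : comb_type CW (Imp (Imp phi (Imp phi chi)) (Imp phi chi))
| ct_app p q A B : comb_type p (Imp A B) -> comb_type q A -> comb_type (CApp p q) B.

Fixpoint comb_fv (c : comb) (x : X) : Prop :=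
  match c with
  | CVar y => x = y
  | CApp p q => comb_fv p x \/ comb_fv q x
  | _ => False
  end.

Fixpoint comb_HRM (c : comb) : Prop :=
  match c with
  | CApp p q => comb_HRM p /\ comb_HRM q /\ dominated (comb_fv p) (comb_fv q)
  | _ => True
  end.

Definition closed_comb (c : comb) : Prop := forall y, ~ comb_fv c y.

Lemma closed_comb_provable c A : comb_type c A -> closed_comb c -> provable_BBpIW A.
Proof.
  induction 1 as [x| | | | |p q A B _ IHp _ IHq]; intros Hc;
    try (constructor; fail).
  - exfalso. apply (Hc x). reflexivity.
  - eapply mp; [apply IHp|apply IHq]; intros y Hy; apply (Hc y); simpl; auto.
Qed.

Definition comb_S : comb := CApp (CApp CB (CApp CB CW)) (CApp (CApp CB (CApp CB' CB')) CB').

Definition comb_S' : comb := CApp (CApp CB (CApp CB CW)) (CApp (CApp CB CB) CB').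

Lemma comb_S_type a b c :
  comb_type comb_S (Imp (Imp a (Imp b c)) (Imp (Imp a b) (Imp a c))).
Proof. repeat econstructor. Qed.

Lemma comb_S'_type a b c :
  comb_type comb_S' (Imp (Imp a b) (Imp (Imp a (Imp b c)) (Imp a c))).
Proof. repeat econstructor. Qed.

Lemma comb_S_closed_HRM : closed_comb comb_S /\ comb_HRM comb_S.
Proof. split; [intros y; simpl; tauto|simpl; repeat split; intros z Hz; simpl in Hz; tauto]. Qed.

Lemma comb_S'_closed_HRM : closed_comb comb_S' /\ comb_HRM comb_S'.
Proof. split; [intros y; simpl; tauto|simpl; repeat split; intros z Hz; simpl in Hz; tauto]. Qed.

(* Two closed combinators of flipped types allow applying to [p] and [q] in
   whichever order keeps the result HRM. *)
Lemma HRM_apply2 c1 c2 p q T1 T2 R :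
  comb_type c1 (Imp T1 (Imp T2 R)) -> closed_comb c1 -> comb_HRM c1 ->
  comb_type c2 (Imp T2 (Imp T1 R)) -> closed_comb c2 -> comb_HRM c2 ->
  comb_type p T1 -> comb_HRM p -> comb_type q T2 -> comb_HRM q ->
  exists N, comb_type N R /\ comb_HRM N /\
    same_vars (comb_fv N) (var_union (comb_fv p) (comb_fv q)).
Proof.
  intros t1 c1_cl h1 t2 c2_cl h2 tp hp tq hq.
  destruct (dominated_total (comb_fv p) (comb_fv q)) as [Hpq|Hqp].
  - exists (CApp (CApp c1 p) q). split; [econstructor; [econstructor|]; eauto|].
    split.
    + simpl. repeat split; auto.
      * intros y Hy. destruct (c1_cl y Hy).
      * intros y [Hy|Hy]; [destruct (c1_cl y Hy)|exact (Hpq y Hy)].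
    + intros y. simpl. unfold var_union. specialize (c1_cl y). tauto.
  - exists (CApp (CApp c2 q) p). split; [econstructor; [econstructor|]; eauto|].
    split.
    + simpl. repeat split; auto.
      * intros y Hy. destruct (c2_cl y Hy).
      * intros y [Hy|Hy]; [destruct (c2_cl y Hy)|exact (Hqp y Hy)].
    + intros y. simpl. unfold var_union. specialize (c2_cl y). tauto.
Qed.

Lemma bracket_abstraction c A :
  comb_type c A -> comb_HRM c -> forall x, comb_fv c x ->
  (forall y, comb_fv c y -> O y <= O x) ->
  exists c', comb_type c' (Imp (Omega x) A) /\ comb_HRM c' /\
    same_vars (comb_fv c') (fun y => comb_fv c y /\ y <> x).
Proof.
  intros Ht. induction Ht as [y| | | | |p q A B tp IHp tq IHq];
    intros Hh x Hx Hmax; simpl in Hx; try contradiction.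
  - subst. exists CI. split; [constructor|]. split; [exact I|].
    intros z; simpl. tauto.
  - destruct Hh as [hp [hq Hdom]].
    assert (xq : comb_fv q x) by exact (dominated_max_in_right Hdom Hx Hmax).
    destruct (IHq hq x xq (fun y Hy => Hmax y (or_intror Hy))) as [q' [tq' [hq' Eq]]].
    destruct (classic (comb_fv p x)) as [xp|nxp].
    + destruct (IHp hp x xp (fun y Hy => Hmax y (or_introl Hy))) as [p' [tp' [hp' Ep]]].
      destruct comb_S_closed_HRM as [cS hS]. destruct comb_S'_closed_HRM as [cS' hS'].
      destruct (HRM_apply2 (comb_S_type _ _ _) cS hS (comb_S'_type _ _ _) cS' hS'
                  tp' hp' tq' hq') as [N [tN [hN EN]]].
      exists N. split; [exact tN|]. split; [exact hN|].
      intros y. rewrite (EN y). unfold var_union. rewrite (Ep y), (Eq y). simpl. tauto.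
    + destruct (HRM_apply2 (ct_B _ _ _) (fun y H => H) I (ct_B' _ _ _) (fun y H => H) I
                  tp hp tq' hq') as [N [tN [hN EN]]].
      exists N. split; [exact tN|]. split; [exact hN|].
      assert (Hpx : forall y, comb_fv p y -> y <> x) by (intros y Hy ->; contradiction).
      intros y. rewrite (EN y). unfold var_union. rewrite (Eq y). simpl.
      specialize (Hpx y). tauto.
Qed.

Lemma typed_term_to_comb M A : has_type O Omega M A ->
  exists c, comb_type c A /\ comb_HRM c /\ same_vars (comb_fv c) (fv M).
Proof.
  induction 1 as [x|x M psi _ [c [tc [hc Ec]]] HH|M N chi psi _ [c1 [t1 [h1 E1]]] _ [c2 [t2 [h2 E2]]] HH].
  - exists (CVar x). split; [constructor|]. split; [exact I|]. intros y; simpl; tauto.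
  - inversion HH as [|x0 M0 _ Hx Hmax|]; subst.
    destruct (bracket_abstraction tc hc (proj2 (Ec x) Hx)
                (fun y Hy => Hmax y (proj1 (Ec y) Hy))) as [c' [t' [h' E']]].
    exists c'. split; [exact t'|]. split; [exact h'|].
    intros y. rewrite (E' y), (Ec y). simpl. tauto.
  - inversion HH as [| |M0 N0 _ _ Hdom]; subst.
    exists (CApp c1 c2). split; [econstructor; eauto|]. split.
    + simpl. repeat split; auto. intros z Hz. apply E1 in Hz.
      destruct (Hdom z Hz) as [y [Hy Hle]]. exists y. split; [apply E2, Hy|exact Hle].
    + intros y. simpl. rewrite (E1 y), (E2 y). tauto.
Qed.

Theorem NF_inhabited_provable phi : NF_inhabited O Omega phi -> provable_BBpIW phi.
Proof.
  intros [M [_ [Hcl [_ Hty]]]].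
  destruct (typed_term_to_comb Hty) as [c [tc [_ Ec]]].
  apply (closed_comb_provable tc). intros y Hy. exact (Hcl y (proj1 (Ec y) Hy)).
Qed.

End BracketAbstraction.
End HRMLogic.

Theorem lemma1p10 (X : Type) (O : X -> nat) (Omega : X -> form)
  (X_countably_infinite : exists f : nat -> X,
      (forall m n, f m = f n -> m = n) /\ (forall x, exists n, f n = x))
  (O_inj : forall x y, O x = O y -> x = y)
  (Omega_inf : forall (phi : form) (l : list X),
      exists x, Omega x = phi /\ ~ In x l) :
  forall phi : form, provable_BBpIW phi <-> NF_inhabited O Omega phi.
Proof.
  intros phi. split.
  - exact (@provable_NF_inhabited X O O_inj Omega Omega_inf phi).
  - exact (@NF_inhabited_provable X O O_inj Omega phi).
Qed.
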